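(* Let $\rho\in(0,1)$. For any $z\in\mathbb C$ with $|z|\le\rho$, $$\big|1-\exp(\mathrm i\phi(1+z))+\mathrm i\,\Im(z)\big|\le\frac{2-\rho}{(1-\rho)^2}|z|^2.$$
   Context: For $u\in\mathbb C$, $\exp(\mathrm i\phi(u))=u/|u|$ if $u\neq0$ (and $1$ if $u=0$). *)

From mathcomp Require Import all_boot all_order all_algebra.
From mathcomp Require Import complex.
From mathcomp Require Import reals.
Set Implicit Arguments. Unset Strict Implicit. Unset Printing Implicit Defensive.
Import Order.TTheory GRing.Theory Num.Theory.
Local Open Scope ring_scope.
Local Open Scope complex_scope.

(* exp(i phi(u)) : the unit phase factor u/|u| (and 1 if u = 0). *)
Definition expiphi (R : rcfType) (u : R[i]) : R[i] :=
  if u == 0 then 1 else u / `|u|.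

From mathcomp Require Import all_boot all_order all_algebra.
From mathcomp Require Import complex.
From mathcomp Require Import reals.
From mathcomp Require Import ring lra.
Import Order.TTheory GRing.Theory Num.Theory.
Local Open Scope ring_scope.
Local Open Scope complex_scope.

(* Write 1 + z = x + i y and r = |1 + z|.  Then
     1 - (1 + z) / r + i y = ((r - x) + i y (r - 1)) / r,
   and both parts of the numerator are O(|z|^2): r - x = y^2 / (r + x) with
   r + x >= 2 (1 - rho), and |y| |r - 1| <= |z|^2 by the reverse triangle
   inequality.  Dividing by r >= 1 - rho =: c bounds the defect by
   (1 / (2 c) + 1) |z|^2 / c <= (1 + c) |z|^2 / c^2, and 1 + c = 2 - rho. *)

Lemma defect_ratio_le (R : realFieldType) (c s r d e : R) :
  0 < c -> s <= 1 - c -> 1 - s <= r -> 0 <= d -> d * (2 * c) <= s ^+ 2 ->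
  e <= s ^+ 2 -> (d + e) / r <= (1 + c) / c ^+ 2 * s ^+ 2.
Proof.
move=> c0 s_le r_ge d0 hd he; have r0 : 0 < r by lra.
set k := s ^+ 2 / c.
have d_le : d <= k by rewrite ler_pdivlMr //; nra.
have -> : (1 + c) / c ^+ 2 * s ^+ 2 = (k + s ^+ 2) / c.
  by rewrite /k; field; rewrite gt_eqF.
have : (k + s ^+ 2) / c * c <= (k + s ^+ 2) / c * r.
  by apply: ler_wpM2l; [rewrite /k !(divr_ge0, addr_ge0, sqr_ge0, ltW c0) | lra].
rewrite divfK ?gt_eqF // ler_pdivrMr //; lra.
Qed.

Section PhaseDefect.
Context {R : rcfType}.

Local Notation hypot x y := (Num.sqrt (x ^+ 2 + y ^+ 2)).

Lemma normC_real (x : R) : `|x%:C| = `|x|%:C :> R[i].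
Proof. by rewrite normc_def /= expr0n /= addr0 sqrtr_sqr. Qed.

Lemma normC_i : `|'i| = 1 :> R[i].
Proof. by rewrite normc_def /= expr0n /= add0r expr1n sqrtr1. Qed.

Lemma normC_complex (x y : R) : `|x +i* y| = (hypot x y)%:C.
Proof. by rewrite normc_def. Qed.

Lemma normC_Re_Im_le (u v : R) : `|u%:C + 'i * v%:C| <= (`|u| + `|v|)%:C.
Proof.
apply: le_trans (ler_normD _ _) _.
by rewrite normrM normC_i mul1r !normC_real rmorphD.
Qed.

Lemma normr_le_hypot (x y : R) : `|x| <= hypot x y.
Proof. by rewrite -sqrtr_sqr ler_wsqrtr // lerDl sqr_ge0. Qed.

Lemma hypot_gt0 (x y : R) : (0 < hypot x y) = (x +i* y != 0).
Proof.
rewrite lt_def sqrtr_ge0 andbT -[_ +i* _ == 0]normr_eq0 normC_complex.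
by rewrite -(inj_eq (@complexI R)).
Qed.

Lemma hypot_subrMaddr (x y : R) : (hypot x y - x) * (hypot x y + x) = y ^+ 2.
Proof.
by rewrite -subr_sqr sqr_sqrtr ?addr_ge0 ?sqr_ge0 // addrAC subrr add0r.
Qed.

Lemma dist_hypot_add1_le (a b : R) : `|hypot (1 + a) b - 1| <= hypot a b.
Proof.
rewrite -lecR -normC_real rmorphB /= -(normC_complex a).
have -> : a +i* b = (1 + a) +i* b - 1 by simpc; rewrite addrAC subrr add0r.
by have := ler_dist_dist ((1 + a) +i* b) 1; rewrite normr1 normC_complex.
Qed.

Lemma phase_defect_le (x y : R) : x +i* y != 0 ->
  `|1 - expiphi (x +i* y) + 'i * y%:C|
    <= ((hypot x y - x + `|y| * `|hypot x y - 1|) / hypot x y)%:C.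
Proof.
move=> w0; have n0 : 0 < hypot x y by rewrite hypot_gt0.
set n := hypot x y in n0 *.
have nC0 : n%:C != 0 by rewrite (inj_eq (@complexI R)) gt_eqF.
have -> : 1 - expiphi (x +i* y) + 'i * y%:C
    = ((n - x)%:C + 'i * (y * (n - 1))%:C) / n%:C.
  rewrite /expiphi (negbTE w0) normC_complex -/n.
  have -> : x +i* y = x%:C + 'i * y%:C by simpc.
  by rewrite !(rmorphB, rmorphM) /= rmorph1; field.
rewrite normrM normfV normC_real (gtr0_norm n0).
rewrite [in X in _ <= X]rmorphM /= fmorphV.
apply: ler_wpM2r; first by rewrite invr_ge0 ler0c ltW.
apply: le_trans (normC_Re_Im_le (n - x) (y * (n - 1))) _.
have x_le_n : x <= n := le_trans (ler_norm x) (normr_le_hypot x y).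
by rewrite lecR normrM lerD2r ger0_norm ?subr_ge0.
Qed.

Lemma phase_defect_bound (a b c : R) : 0 < c -> hypot a b <= 1 - c ->
  (hypot (1 + a) b - (1 + a) + `|b| * `|hypot (1 + a) b - 1|) / hypot (1 + a) b
    <= (1 + c) / c ^+ 2 * hypot a b ^+ 2.
Proof.
move=> c0 s_le; set r := hypot (1 + a) b; set s := hypot a b in s_le *.
have r_near1 : `|r - 1| <= s := dist_hypot_add1_le a b.
have r_ge : 1 - s <= r by move: r_near1; rewrite ler_distl => /andP[].
have : `|a| <= s := normr_le_hypot a b.
rewrite ler_norml => /andP[a_ge _].
have b_le : `|b| <= s by rewrite /s addrC normr_le_hypot.
have s2 : s ^+ 2 = a ^+ 2 + b ^+ 2 by rewrite sqr_sqrtr ?addr_ge0 ?sqr_ge0.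
have a_le_r : 1 + a <= r := le_trans (ler_norm _) (normr_le_hypot _ _).
apply: defect_ratio_le => //.
- by rewrite subr_ge0.
- apply: (@le_trans _ _ (b ^+ 2)); last by rewrite s2 lerDr sqr_ge0.
  rewrite -(hypot_subrMaddr (1 + a) b) -/r.
  by apply: ler_wpM2l; [rewrite subr_ge0 | lra].
- by rewrite expr2 ler_pM.
Qed.

End PhaseDefect.

Theorem lemma17 (R : realType) (rho : R) (hrho0 : 0 < rho) (hrho1 : rho < 1)
  (z : R[i]) (hz : `|z| <= rho%:C) :
  `|1 - expiphi (1 + z) + 'i * (complex.Im z)%:C|
    <= ((2 - rho) / (1 - rho) ^+ 2)%:C * `|z| ^+ 2.
Proof.
case: z hz => a b /=; rewrite normC_complex lecR => s_le.
have w0 : (1 + a) +i* b != 0.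
  rewrite -hypot_gt0; have := dist_hypot_add1_le a b.
  by rewrite ler_distl => /andP[r_ge _]; lra.
have -> : 1 + a +i* b = (1 + a) +i* b by simpc.
have -> : 2 - rho = 1 + (1 - rho) by ring.
apply: le_trans (phase_defect_le _ _ w0) _.
rewrite -rmorphXn -rmorphM lecR.
by apply: phase_defect_bound; lra.
Qed.
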